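(* Let $U$ be a connected graph containing exactly one cycle, where the cycle has an even number of vertices, exactly one vertex of the cycle has degree $3$ in $U$, and all other vertices of the cycle have degree $2$ in $U$. Let $\Delta$ be the distance squared matrix of $U$. If $U$ has at least one vertex of degree $2$ that is not on the cycle, then $i_0(\Delta)\ge 1$.
   Context: For a connected graph with vertices $1,\dots,n$, the distance squared matrix is the matrix with $(i,j)$ entry $d_{ij}^2$, where $d_{ij}$ is the graph distance between $i$ and $j$. For a real symmetric matrix $M$, $i_0(M)$ denotes the multiplicity of $0$ as an eigenvalue of $M$. *)

From HB Require Import structures.
From mathcomp Require Import all_boot all_order all_algebra.
Set Implicit Arguments. Unset Strict Implicit. Unset Printing Implicit Defensive.
Import Order.TTheory GRing.Theory Num.Theory.

Definition simple_graph (T : finType) (e : rel T) : Prop :=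
  symmetric e /\ irreflexive e.

Definition connected_graph (T : finType) (e : rel T) : Prop :=
  forall x y : T, connect e x y.

Definition deg (T : finType) (e : rel T) (x : T) : nat := #|[set y | e x y]|.

(* graph distance: the least k such that there is a walk of length k from x
   to y (searched among 0 .. #|T|-1, enough for a connected graph) *)
Definition walk_of_len (T : finType) (e : rel T) (x y : T) (k : nat) : bool :=
  [exists p : k.-tuple T, path e x p && (last x p == y)].

Definition gdist (T : finType) (e : rel T) (x y : T) : nat :=
  find (walk_of_len e x y) (iota 0 #|T|).

Definition is_cycle (T : finType) (e : rel T) (c : seq T) : bool :=
  [&& cycle e c, uniq c & (2 < size c)].

Definition cycle_edge (T : finType) (c : seq T) (x y : T) : bool :=
  (x \in c) && ((next c x == y) || (prev c x == y)).

(* U contains exactly one cycle, namely the one given by c: every cycle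
   of U is the same subgraph (same edge set) as c *)
Definition unique_cycle (T : finType) (e : rel T) (c : seq T) : Prop :=
  is_cycle e c /\
  forall c' : seq T, is_cycle e c' ->
    forall x y, cycle_edge c' x y = cycle_edge c x y.

Definition dist_sq_mx (R : nzRingType) (n : nat) (e : rel 'I_n) : 'M[R]_n :=
  \matrix_(i, j) (((gdist e i j) ^ 2)%N%:R)%R.

Definition i0 (R : fieldType) (n : nat) (M : 'M[R]_n) : nat :=
  mup 0%R (char_poly M).

(* Let the cycle C have length 2k, v its vertex of degree 3, t the neighbour
   of v off C, and a the vertex of C opposite to v; let w be a vertex of
   degree 2 off C, with neighbours p and q.  All other cycle vertices have
   degree 2, so everything off C hangs from v through t, and the distance from
   a cycle vertex is read off along C and then through v.  This gives, for
   every vertex u,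
     (k+1) d(v,u)^2 + k(k+1) = d(a,u)^2 + k d(t,u)^2.
   As w lies on no cycle, removing w separates p from q, so for u <> w one of
   p, q is one step closer to u than w and the other one step farther:
     d(p,u)^2 + d(q,u)^2 = 2 d(w,u)^2 + 2   (also true for u = w).
   Hence 2(k+1) e_v - 2 e_a - 2k e_t + k(k+1) (e_p + e_q - 2 e_w) is a nonzero
   vector in the left kernel of the distance squared matrix. *)

From HB Require Import structures.
From mathcomp Require Import all_boot all_order all_algebra.
From mathcomp Require Import zify ring.
Import Order.TTheory GRing.Theory Num.Theory.

Set Implicit Arguments.
Unset Strict Implicit.
Unset Printing Implicit Defensive.

Section CyclicIndex.
Variable N : nat.

Definition cfwd i j := if i <= j then j - i else j + N - i.
Definition cdist i j := minn (cfwd i j) (cfwd j i).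
Definition csucc j := if j.+1 < N then j.+1 else 0.
Definition cpred j := if 0 < j then j.-1 else N.-1.
Definition cshift k j := if j + k < N then j + k else j + k - N.

Local Ltac cyclic_lia := intros; unfold cdist, cfwd, csucc, cpred, cshift;
  repeat match goal with
  | |- context [if ?b then _ else _] => destruct b eqn:?
  | _ : context [if ?b then _ else _] |- _ => destruct b eqn:?
  end; try apply/eqP; lia.

Lemma cdistxx i : cdist i i = 0. Proof. cyclic_lia. Qed.
Lemma csucc_lt j : j < N -> csucc j < N. Proof. cyclic_lia. Qed.
Lemma cpred_lt j : j < N -> cpred j < N. Proof. cyclic_lia. Qed.
Lemma cshift_lt k j : k <= N -> j < N -> cshift k j < N. Proof. cyclic_lia. Qed.
Lemma cpredK j : j < N -> cpred (csucc j) = j. Proof. cyclic_lia. Qed.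
Lemma csuccK j : j < N -> csucc (cpred j) = j. Proof. cyclic_lia. Qed.
Lemma csucc_neq_pred j : 2 < N -> j < N -> csucc j != cpred j. Proof. cyclic_lia. Qed.
Lemma cshift_neq k j : 0 < k -> k < N -> j < N -> cshift k j != j. Proof. cyclic_lia. Qed.
Lemma cdist_succ_le i j : i < N -> j < N -> cdist i (csucc j) <= cdist i j + 1.
Proof. cyclic_lia. Qed.
Lemma cdist_le_succ i j : i < N -> j < N -> cdist i j <= cdist i (csucc j) + 1.
Proof. cyclic_lia. Qed.
Lemma cdist_succl j : 1 < N -> j < N -> cdist (csucc j) j = 1. Proof. cyclic_lia. Qed.
Lemma cdist_predl j : 1 < N -> j < N -> cdist (cpred j) j = 1. Proof. cyclic_lia. Qed.
Lemma cdist_shift_half k i j : N = k + k -> i < N -> j < N ->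
  cdist i j + cdist i (cshift k j) = k.
Proof. cyclic_lia. Qed.

End CyclicIndex.

Lemma last_rev_belast (T : Type) (x : T) (s : seq T) :
  last (last x s) (rev (belast x s)) = x.
Proof.
case/lastP: s => [|s y] //=.
by rewrite last_rcons belast_rcons rev_cons last_rcons.
Qed.

Definition walk (T : Type) (e : rel T) (x y : T) (m : nat) : Prop :=
  exists p : seq T, [/\ size p = m, path e x p & last x p = y].

Section GraphDistance.
Variables (T : finType) (e : rel T).
Hypothesis e_sym : symmetric e.
Hypothesis e_conn : connected_graph e.

Local Notation d := (gdist e).

Lemma walk_of_lenP x y m : reflect (walk e x y m) (walk_of_len e x y m).
Proof.
apply: (iffP existsP) => [[p /andP[pp /eqP lp]] | [p [sp pp lp]]].
  by exists (val p); rewrite size_tuple.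
have sp' : size p == m by apply/eqP.
by exists (Tuple sp'); rewrite /= pp lp eqxx.
Qed.

Lemma walk_rcons x y z m : walk e x y m -> e y z -> walk e x z m.+1.
Proof.
case=> p [sp pp lp] eyz; exists (rcons p z).
by rewrite size_rcons rcons_path last_rcons lp sp pp eyz.
Qed.

Lemma walk_cat x y z m k : walk e x y m -> walk e y z k -> walk e x z (m + k).
Proof.
case=> p [<- pp <-] [q [<- pq <-]]; exists (p ++ q).
by rewrite size_cat cat_path last_cat pp pq.
Qed.

Lemma walk_sym x y m : walk e x y m -> walk e y x m.
Proof.
case=> p [<- pp <-]; elim: p x pp => [|z p IH] x /=; first by exists [::].
by case/andP=> exz /IH/walk_rcons; apply; rewrite e_sym.
Qed.

Lemma has_walk_of_len x y : has (walk_of_len e x y) (iota 0 #|T|).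
Proof.
have /connectP[p pp ->] := e_conn x y; have [p' pp' up' _] := shortenP pp.
apply/hasP; exists (size p'); last by apply/walk_of_lenP; exists p'.
by rewrite mem_iota /= add0n; have := card_uniqP up' => /= <-; apply: max_card.
Qed.

Lemma gdist_lt_card x y : d x y < #|T|.
Proof. by rewrite /gdist -[X in _ < X](size_iota 0) -has_find has_walk_of_len. Qed.

Lemma gdist_walk x y : walk e x y (d x y).
Proof.
have := nth_find 0 (has_walk_of_len x y).
by rewrite nth_iota ?gdist_lt_card // => /walk_of_lenP.
Qed.

Lemma gdist_min x y m : walk e x y m -> d x y <= m.
Proof.
move=> wm; have [geT|ltT] := leqP #|T| m.
  exact: ltnW (leq_trans (gdist_lt_card x y) geT).
rewrite leqNgt; apply/negP => /(before_find 0).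
by rewrite nth_iota ?add0n //; move/walk_of_lenP: wm => ->.
Qed.

Lemma gdist_sym x y : d x y = d y x.
Proof. by apply/eqP; rewrite eqn_leq !gdist_min //; apply/walk_sym/gdist_walk. Qed.

Lemma gdist_triangle x y z : d x z <= d x y + d y z.
Proof. by apply/gdist_min/walk_cat; apply: gdist_walk. Qed.

Lemma gdistxx x : d x x = 0.
Proof. by apply/eqP; rewrite -leqn0; apply: gdist_min; exists [::]. Qed.

Lemma gdist_eq0 x y : (d x y == 0) = (x == y).
Proof.
apply/eqP/eqP => [|->]; last exact: gdistxx.
by have [[|? ?] [/= <- _ <-]] := gdist_walk x y.
Qed.

Lemma gdist_edge_le x y : e x y -> d x y <= 1.
Proof. by move=> exy; apply: gdist_min; exists [:: y]; rewrite /= exy. Qed.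

Lemma gdist_step x y : x != y -> exists2 z, e x z & (d z y).+1 = d x y.
Proof.
move=> nxy; have [[|z p] [sp /= pp lp]] := gdist_walk x y.
  by move: lp nxy => /= ->; rewrite eqxx.
case/andP: pp => exz pz; exists z => //; apply/eqP; rewrite eqn_leq.
have -> : (d z y).+1 <= d x y by rewrite -sp ltnS gdist_min //; exists p.
by rewrite (leq_trans (gdist_triangle x z y)) // -add1n leq_add2r gdist_edge_le.
Qed.

Lemma gdist_edge_lipschitz (phi : T -> nat) :
  (forall x y, e x y -> phi y <= phi x + 1) ->
  forall x y, phi y <= phi x + d x y.
Proof.
move=> phi_lip x y; have [p [<- pp <-]] := gdist_walk x y.
elim: p x pp => [|z p IH] x /=; first by rewrite addn0.
case/andP=> /phi_lip exz /IH; lia.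
Qed.

Lemma gdist_mem_path x s y : path e x s -> y \in s -> d y (last x s) < size s.
Proof.
elim: s x => [|z s IH] x //= /andP[exz pz]; rewrite inE => /predU1P[->|ys].
  by rewrite ltnS gdist_min //; exists s.
exact: leq_trans (IH _ pz ys) _.
Qed.

Hypothesis e_irr : irreflexive e.

Lemma gdist_edge x y : e x y -> d x y = 1.
Proof.
move=> exy; apply/eqP; rewrite eqn_leq gdist_edge_le // lt0n gdist_eq0.
by apply: contraTneq exy => ->; rewrite e_irr.
Qed.

End GraphDistance.

Lemma deg2_nbrs (T : finType) (e : rel T) x : deg e x = 2 ->
  exists p q, [/\ p != q, e x p, e x q & forall z, e x z -> z = p \/ z = q].
Proof.
move=> /eqP/cards2P[p [q [npq nbr_x]]]; exists p, q.
have nbrP z : reflect (z = p \/ z = q) (e x z).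
  by rewrite -[e x z](in_set (e x)) nbr_x !inE; apply: pred2P.
by split=> //; [apply/nbrP; left | apply/nbrP; right | move=> z /nbrP].
Qed.

Section OffCycleVertex.
Variables (T : finType) (e : rel T) (c : seq T).
Hypotheses (e_sym : symmetric e) (e_irr : irreflexive e).
Hypothesis e_conn : connected_graph e.
Hypothesis c_unique : unique_cycle e c.
Variable w : T.
Hypothesis wc : w \notin c.

Local Notation d := (gdist e).

Lemma offcycle_path_mem p q s : e w p -> e w q -> p != q ->
  path e p s -> last p s = q -> w \in s.
Proof.
move=> ewp ewq npq ps ls; apply: contraT => ws.
case: (shortenP ps) ls => s' ps' us' ss' ls'.
have ws' : w \notin p :: s'.
  rewrite inE negb_or (contra (ss' w) ws) andbT.
  by apply: contraTneq ewp => ->; rewrite e_irr.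
have cyc_w : is_cycle e [:: w, p & s'].
  rewrite /is_cycle /= ewp rcons_path ps' ls' e_sym ewq ws' -cons_uniq us'.
  by case: s' {ps' us' ss' ws'} ls' npq => //= ->; rewrite eqxx.
have := c_unique.2 _ cyc_w w p.
by rewrite /cycle_edge (negbTE wc) /= => <-; rewrite mem_head !eqxx.
Qed.

Lemma offcycle_nbr_gdist p q u : e w p -> e w q -> p != q ->
  (d p u).+1 = d w u -> d q u = (d w u).+1.
Proof.
move=> ewp ewq npq dpu; apply/eqP; rewrite eqn_leq ltnNge.
rewrite -add1n (leq_trans (gdist_triangle e_conn q w u)) ?leq_add2r;
  last by rewrite gdist_sym // gdist_edge_le.
apply/negP => dqu.
have [P [sP pP lP]] := gdist_walk e_conn p u.
have [Q [sQ pQ lQ]] := gdist_walk e_conn q u.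
have wP : w \notin P.
  by apply/negP => /(gdist_mem_path e_conn pP); rewrite lP sP; lia.
have wQ : w \notin Q.
  by apply/negP => /(gdist_mem_path e_conn pQ); rewrite lQ sQ; lia.
pose s := P ++ rev (belast q Q).
have ps : path e p s.
  rewrite cat_path pP lP -lQ rev_path.
  by rewrite (@eq_path _ _ e) // => x y; rewrite e_sym.
have ls : last p s = q by rewrite last_cat lP -lQ last_rev_belast.
have := offcycle_path_mem ewp ewq npq ps ls; rewrite mem_cat mem_rev (negbTE wP) /=.
apply/negP; apply: contra wQ => /mem_belast; rewrite inE => /predU1P[wq|//].
by move: ewq; rewrite -wq e_irr.
Qed.

Lemma offcycle_deg2_sqdist p q : e w p -> e w q -> p != q ->
  (forall z, e w z -> z = p \/ z = q) ->
  forall u, d p u ^ 2 + d q u ^ 2 = 2 * d w u ^ 2 + 2.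
Proof.
move=> ewp ewq npq nbr_w u; have [<-|nwu] := eqVneq w u.
  by rewrite gdistxx // !(gdist_edge e_conn e_irr) // e_sym.
have [z /nbr_w[]-> dzu] := gdist_step e_conn nwu.
  by rewrite (offcycle_nbr_gdist ewp ewq npq dzu) -dzu; lia.
rewrite eq_sym in npq.
by rewrite (offcycle_nbr_gdist ewq ewp npq dzu) -dzu; lia.
Qed.

End OffCycleVertex.

Definition antipode (T : eqType) (c : seq T) (v : T) :=
  nth v c (cshift (size c) (size c)./2 (index v c)).

Section CycleWithOneBranchVertex.
Variables (T : finType) (e : rel T).
Hypotheses (e_sym : symmetric e) (e_irr : irreflexive e).
Hypothesis e_conn : connected_graph e.
Variables (c : seq T) (v : T).
Hypotheses (c_cycle : is_cycle e c) (vc : v \in c).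
Hypothesis deg_c : forall x, x \in c -> x != v -> deg e x = 2.

Local Notation N := (size c).
Local Notation d := (gdist e).
Local Notation cv i := (nth v c i).
Local Notation iv := (index v c).

Let c_path : cycle e c. Proof. by case/and3P: c_cycle. Qed.
Let c_uniq : uniq c. Proof. by case/and3P: c_cycle. Qed.
Let c_size : 2 < N. Proof. by case/and3P: c_cycle. Qed.
Let iv_lt : iv < N. Proof. by rewrite index_mem. Qed.

Let cv_inj i j : i < N -> j < N -> cv i = cv j -> i = j.
Proof. by move=> ilt jlt /eqP; rewrite nth_uniq // => /eqP. Qed.

Lemma cycle_edge_succ j : j < N -> e (cv j) (cv (csucc N j)).
Proof.
move=> jlt; move: c_path; rewrite (cycle_path v) => /(pathP v) cpath.
rewrite /csucc; case: ifP => [succ_lt|succ_ge]; first exact: (cpath j.+1 succ_lt).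
have -> : j = N.-1 by lia.
by rewrite nth_last; apply: (cpath 0); lia.
Qed.

Lemma cycle_edge_pred j : j < N -> e (cv j) (cv (cpred N j)).
Proof. by move=> jlt; have := cycle_edge_succ (cpred_lt jlt); rewrite csuccK // e_sym. Qed.

Lemma cycle_nbr j z : j < N -> cv j != v -> e (cv j) z ->
  z = cv (csucc N j) \/ z = cv (cpred N j).
Proof.
move=> jlt jv ejz; have [p [q [npq _ _ nbr_j]]] := deg2_nbrs (deg_c (mem_nth v jlt) jv).
have succ_pred : cv (csucc N j) != cv (cpred N j).
  apply: contra (csucc_neq_pred c_size jlt) => /eqP.
  by move/cv_inj => -> //; rewrite ?csucc_lt ?cpred_lt.
move/eqP: succ_pred => succ_pred; move/eqP: npq => npq.
case: (nbr_j _ ejz) (nbr_j _ (cycle_edge_succ jlt)) (nbr_j _ (cycle_edge_pred jlt))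
  => [] -> [] hs [] hp; first [by left; congruence | by right; congruence | congruence].
Qed.

Lemma cycle_offcycle_edge x y : x \in c -> y \notin c -> e x y -> x = v.
Proof.
move=> xc yc exy; apply/eqP; apply: contraNT yc => xv.
have xlt : index x c < N by rewrite index_mem.
rewrite -(nth_index v xc) in exy xv.
by case: (cycle_nbr xlt xv exy) => ->; rewrite mem_nth ?csucc_lt ?cpred_lt.
Qed.

Lemma branch_cycle_nbr y : y \in c -> e v y ->
  y = cv (csucc N iv) \/ y = cv (cpred N iv).
Proof.
move=> yc evy; have ylt : index y c < N by rewrite index_mem.
have yv : cv (index y c) != v.
  by rewrite nth_index //; apply: contraTneq evy => ->; rewrite e_irr.
rewrite e_sym -(nth_index v yc) in evy.
have [vy|vy] := cycle_nbr ylt yv evy.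
  have -> : iv = csucc N (index y c) by apply: cv_inj; rewrite ?csucc_lt -?vy ?nth_index.
  by right; rewrite cpredK ?nth_index.
have -> : iv = cpred N (index y c) by apply: cv_inj; rewrite ?cpred_lt -?vy ?nth_index.
by left; rewrite csuccK ?nth_index.
Qed.

Lemma cycle_walk i m : i + m < N -> walk e (cv i) (cv (i + m)) m.
Proof.
elim: m => [|m IH] lt_im; first by rewrite addn0; exists [::].
apply: walk_rcons (IH _) _; first lia.
by have := @cycle_edge_succ (i + m); rewrite /csucc -addnS lt_im; apply; lia.
Qed.

Lemma gdist_cycle_fwd i j : i < N -> j < N -> d (cv i) (cv j) <= cfwd N i j.
Proof.
move=> ilt jlt; apply: (gdist_min e_conn); rewrite /cfwd; case: ifP => le_ij.
  by have := @cycle_walk i (j - i); rewrite subnKC //; apply; lia.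
have to_last : walk e (cv i) (cv N.-1) (N.-1 - i).
  by have := @cycle_walk i (N.-1 - i); rewrite subnKC; [apply | ..]; lia.
have wrap : e (cv N.-1) (cv 0).
  by have := @cycle_edge_succ N.-1; rewrite /csucc prednK ?ltnn; [apply | ..]; lia.
have := walk_cat (walk_rcons to_last wrap) (cycle_walk (_ : 0 + j < N)).
by rewrite add0n (_ : _ + j = j + N - i); [apply | ..]; lia.
Qed.

Lemma gdist_cycle_le i j : i < N -> j < N -> d (cv i) (cv j) <= cdist N i j.
Proof.
by move=> ilt jlt; rewrite leq_min gdist_cycle_fwd // gdist_sym // gdist_cycle_fwd.
Qed.

Definition cycle_gdist i x :=
  if x \in c then cdist N i (index x c) else cdist N i iv + d v x.

Lemma cycle_gdist_edge i x y : i < N -> e x y ->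
  cycle_gdist i y <= cycle_gdist i x + 1.
Proof.
move=> ilt exy; rewrite /cycle_gdist.
case xc: (x \in c); case yc: (y \in c).
- have xlt : index x c < N by rewrite index_mem.
  have ylt : index y c < N by rewrite index_mem.
  have [xv|xv] := eqVneq x v.
    have yv : cv (index y c) != v.
      by rewrite nth_index //; apply: contraTneq exy => ->; rewrite xv e_irr.
    rewrite e_sym -(nth_index v yc) in exy.
    case: (cycle_nbr ylt yv exy) => /(congr1 (index^~ c)).
      by rewrite index_uniq ?csucc_lt // => ->; apply: cdist_le_succ.
    rewrite index_uniq ?cpred_lt // => ->.
    by have := cdist_succ_le ilt (cpred_lt ylt); rewrite csuccK.
  rewrite -(nth_index v xc) in exy xv.
  case: (cycle_nbr xlt xv exy) => /(congr1 (index^~ c)).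
    by rewrite index_uniq ?csucc_lt // => ->; apply: cdist_succ_le.
  rewrite index_uniq ?cpred_lt // => ->.
  by have := cdist_le_succ ilt (cpred_lt xlt); rewrite csuccK.
- have xv := cycle_offcycle_edge xc (negbT yc) exy.
  by rewrite xv in exy *; rewrite gdist_edge.
- have yv : y = v by apply: cycle_offcycle_edge yc (negbT xc) _; rewrite e_sym.
  by rewrite yv -addnA leq_addr.
- rewrite -addnA leq_add2l (leq_trans (gdist_triangle e_conn v x y)) //.
  by rewrite leq_add2l gdist_edge_le.
Qed.

Lemma gdist_cycle i x : i < N -> d (cv i) x = cycle_gdist i x.
Proof.
move=> ilt; apply/eqP; rewrite eqn_leq; apply/andP; split; last first.
  have := gdist_edge_lipschitz e_conn (fun x y => @cycle_gdist_edge i x y ilt) (cv i) x.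
  by rewrite /cycle_gdist mem_nth // index_uniq // cdistxx.
rewrite /cycle_gdist; case: ifP => xc.
  have xlt : index x c < N by rewrite index_mem.
  by have := gdist_cycle_le ilt xlt; rewrite nth_index.
apply: leq_trans (gdist_triangle e_conn (cv i) v x) _.
by rewrite leq_add2r; have := gdist_cycle_le ilt iv_lt; rewrite nth_index.
Qed.

Lemma branch_offcycle_nbr : deg e v = 3 ->
  exists t, [/\ t \notin c, e v t & forall z, z \notin c -> e v z -> z = t].
Proof.
move=> deg_v; set a := cv (csucc N iv); set b := cv (cpred N iv).
have [ac bc] : a \in c /\ b \in c by rewrite !mem_nth ?csucc_lt ?cpred_lt.
have ab : a != b.
  by apply: contra (csucc_neq_pred c_size iv_lt) => /eqP/cv_inj ->; rewrite ?csucc_lt ?cpred_lt.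
have [eva evb] : e v a /\ e v b.
  by split; [have := cycle_edge_succ iv_lt | have := cycle_edge_pred iv_lt];
    rewrite nth_index.
have /cards1P[t off_t] : #|[set y | e v y] :\: [set a; b]| == 1.
  rewrite cardsD (setIidPr _) ?cards2 ?ab -?/(deg e v) ?deg_v //.
  by apply/subsetP => y; rewrite !inE => /pred2P[]->.
have offP y : reflect (e v y /\ y \notin [set a; b]) (y == t).
  by rewrite -in_set1 -off_t !inE andbC; apply: andP.
have [evt tab] : e v t /\ t \notin [set a; b] by apply/offP.
exists t; split=> // [|z zc evz].
  by apply: contra tab => /branch_cycle_nbr-/(_ evt)[]->; rewrite !inE eqxx ?orbT.
apply/eqP/offP; split=> //; rewrite !inE negb_or.
by apply/andP; split; apply: contraNneq zc => ->.
Qed.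

Section Antipode.
Variable k : nat.
Hypothesis N_even : N = k + k.

Local Notation ia := (cshift N k iv).
Let ia_lt : ia < N. Proof. by rewrite cshift_lt //; lia. Qed.

Lemma antipodeE : antipode c v = cv ia.
Proof. by rewrite /antipode [in N./2]N_even addnn doubleK. Qed.

Lemma antipode_in : antipode c v \in c.
Proof. by rewrite antipodeE mem_nth. Qed.

Lemma antipode_neq : antipode c v != v.
Proof.
have [k_gt0 k_lt] : 0 < k /\ k < N by lia.
rewrite antipodeE; apply: contra (cshift_neq k_gt0 k_lt iv_lt) => /eqP av.
by apply/eqP/cv_inj => //; rewrite nth_index.
Qed.

Lemma antipode_nbr_in x : e (antipode c v) x -> x \in c.
Proof.
move=> eax; apply: contraT => xc.
by have := antipode_neq; rewrite (cycle_offcycle_edge antipode_in xc eax) eqxx.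
Qed.

Variable t : T.
Hypotheses (tc : t \notin c) (evt : e v t).
Hypothesis t_unique : forall z, z \notin c -> e v z -> z = t.

Lemma sqdist_antipode u :
  (k + 1) * d v u ^ 2 + k * (k + 1) = d (antipode c v) u ^ 2 + k * d t u ^ 2.
Proof.
rewrite antipodeE; have [uc|uc] := boolP (u \in c).
  have ult : index u c < N by rewrite index_mem.
  rewrite !(gdist_sym e_sym e_conn _ u) -(nth_index v uc) !gdist_cycle //.
  rewrite /cycle_gdist vc mem_nth // (negbTE tc) index_uniq // gdist_edge //.
  move: (cdist_shift_half N_even ult iv_lt).
  by move: (cdist _ _ iv) (cdist _ _ ia) => x y <-; ring.
have d_au : d (cv ia) u = k + d v u.
  rewrite gdist_cycle // /cycle_gdist (negbTE uc).
  by have := cdist_shift_half N_even ia_lt iv_lt; rewrite cdistxx addn0 => ->.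
have vu : v != u by apply: contraNneq uc => <-.
have [z evz d_zu] := gdist_step e_conn vu.
have d_tu : (d t u).+1 = d v u.
  suff zc : z \notin c by rewrite -(t_unique zc evz).
  apply/negP => zc; case: (branch_cycle_nbr zc evz) d_zu => ->.
    rewrite gdist_cycle ?csucc_lt // /cycle_gdist (negbTE uc).
    by rewrite cdist_succl ?(ltnW c_size) // add1n => /eqP; rewrite gtn_eqF.
  rewrite gdist_cycle ?cpred_lt // /cycle_gdist (negbTE uc).
  by rewrite cdist_predl ?(ltnW c_size) // add1n => /eqP; rewrite gtn_eqF.
by rewrite d_au -d_tu; ring.
Qed.

End Antipode.

End CycleWithOneBranchVertex.

Section DistSqKernel.
Local Open Scope ring_scope.

Lemma i0_gt0 (R : fieldType) n (M : 'M[R]_n) (z : 'rV[R]_n) :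
  z != 0 -> z *m M = 0 -> (0 < i0 M)%N.
Proof.
move=> z_neq0 zM0; rewrite /i0 -XsubC_dvd ?monic_neq0 ?char_poly_monic //.
rewrite dvdp_XsubCl -eigenvalue_root_char; apply/eigenvalueP; exists z => //.
by rewrite zM0 scale0r.
Qed.

Lemma dist_sq_mx_i0_gt0 (R : numFieldType) n (e : rel 'I_n) (k : nat)
    (v a t p q w : 'I_n) :
  a \notin [:: v; t; p; q; w] ->
  (forall u, (k + 1) * gdist e v u ^ 2 + k * (k + 1)
             = gdist e a u ^ 2 + k * gdist e t u ^ 2)%N ->
  (forall u, gdist e p u ^ 2 + gdist e q u ^ 2 = 2 * gdist e w u ^ 2 + 2)%N ->
  (0 < i0 (dist_sq_mx R e))%N.
Proof.
move=> a_new sqdist_a sqdist_w; pose dl x : 'rV[R]_n := delta_mx 0 x.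
pose z := 2%:R *: ((k + 1)%:R *: dl v - dl a - k%:R *: dl t)
          + (k * (k + 1))%:R *: (dl p + dl q - 2%:R *: dl w).
apply: (@i0_gt0 _ _ _ z).
  move: a_new; rewrite !inE !negb_or => /and5P[av at_ ap aq aw].
  apply/eqP => /rowP/(_ a); rewrite !mxE /= eqxx (negbTE av) (negbTE at_).
  rewrite (negbTE ap) (negbTE aq) (negbTE aw) /= !(mulr0, subr0, addr0) sub0r.
  by move/eqP; rewrite mulrN1 oppr_eq0 pnatr_eq0.
apply/rowP => j; rewrite !(mulmxDl, mulNmx, =^~ scalemxAl) /dl -!rowE !mxE.
have := congr1 (fun m : nat => m%:R : R) (sqdist_a j).
have := congr1 (fun m : nat => m%:R : R) (sqdist_w j).
rewrite !(natrD, natrM, natrX) => /(canRL (addrK _)) -> /esym/(canRL (addrK _)) ->.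
by ring.
Qed.

End DistSqKernel.

Theorem lemma6p4 (R : realFieldType) (n : nat) (e : rel 'I_n) :
  simple_graph e ->
  connected_graph e ->
  forall c : seq 'I_n,
    unique_cycle e c ->
    ~~ odd (size c) ->
    (exists v, v \in c /\ deg e v = 3 /\
       forall x, x \in c -> x != v -> deg e x = 2) ->
    (exists w, w \notin c /\ deg e w = 2) ->
    1 <= i0 (dist_sq_mx R e).
Proof.
move=> [e_sym e_irr] e_conn c c_unique c_even [v [vc [deg_v deg_c]]] [w [wc deg_w]].
have c_cycle := c_unique.1.
have N_even : size c = (size c)./2 + (size c)./2.
  by rewrite addnn -[LHS]odd_double_half (negbTE c_even).
have [t [tc evt t_unique]] := branch_offcycle_nbr e_sym e_irr c_cycle vc deg_c deg_v.
have [p [q [npq ewp ewq nbr_w]]] := deg2_nbrs deg_w.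
have sqdist_a := sqdist_antipode e_sym e_irr e_conn c_cycle vc deg_c N_even tc evt t_unique.
have sqdist_w := offcycle_deg2_sqdist e_sym e_irr e_conn c_unique wc ewp ewq npq nbr_w.
apply: (dist_sq_mx_i0_gt0 R _ sqdist_a sqdist_w).
have ac := antipode_in c_cycle vc N_even.
have a_nbr_in := antipode_nbr_in e_sym c_cycle vc deg_c N_even.
rewrite !inE !negb_or (antipode_neq c_cycle vc N_even) /=; apply/and4P; split.
- by apply: contraNneq tc => <-.
- by apply: contraNneq wc => ap; apply: a_nbr_in; rewrite ap e_sym.
- by apply: contraNneq wc => aq; apply: a_nbr_in; rewrite aq e_sym.
- by apply: contraNneq wc => <-.
Qed.
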